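(* Let $F_k$ denote the free $k$-algebra on two generators of degree one. (1) If $k$ has characteristic not $2$ and $\sqrt{-1}\in k$, then $F_k$ is a quotient of $A_k$ by a graded ideal. (2) $F_{\mathbb R}$ is not a quotient of $A_{\mathbb R}$ by a graded ideal.
   Context: For a field $k$, $A_k=k\langle x_1,\dots,x_7\rangle/(r_1,\dots,r_7)$, graded by $\deg x_i=1$, with $r_1=[x_2,x_3]+[x_4,x_5]+[x_6,x_7]$, $r_2=[x_3,x_1]+[x_4,x_6]+[x_7,x_5]$, $r_3=[x_1,x_2]+[x_6,x_5]+[x_7,x_4]$, $r_4=[x_5,x_1]+[x_3,x_7]+[x_6,x_2]$, $r_5=[x_1,x_4]+[x_2,x_7]+[x_3,x_6]$, $r_6=[x_7,x_1]+[x_5,x_3]+[x_2,x_4]$, $r_7=[x_1,x_6]+[x_4,x_3]+[x_5,x_2]$. *)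

From HB Require Import structures.
From mathcomp Require Import all_boot all_order all_algebra.
From mathcomp Require Import monalg.
From mathcomp Require Import Rstruct.

Set Implicit Arguments.
Unset Strict Implicit.
Unset Printing Implicit Defensive.
Import GRing.Theory.
Local Open Scope ring_scope.

(* The free (noncommutative) k-algebra k<y_0,...,y_{n-1}>: the monoid algebra
   of the free monoid {fmonom 'I_n} (words in 'I_n). A word of length d has
   degree d, i.e. every generator has degree one. *)
Definition FreeAlg (k : fieldType) (n : nat) := {malg k[{fmonom 'I_n}]}.

Definition gen (k : fieldType) (n : nat) (i : 'I_n) : FreeAlg k n :=
  << fmu i >>.

(* p is homogeneous of degree d: all monomials occurring in p are words of
   length d (the zero polynomial is homogeneous of every degree). *)
Definition homogeneous (k : fieldType) (n : nat) (d : nat) (p : FreeAlg k n) :=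
  forall m : {fmonom 'I_n}, p@_m != 0 -> size (fmonom_val m) = d.

Definition commutator (k : fieldType) (n : nat) (a b : FreeAlg k n) :=
  a * b - b * a.

(* x_1, ..., x_7 of the paper are x 0, ..., x 6 here. *)
Definition x (k : fieldType) (i : nat) : FreeAlg k 7 := gen k (inord i.-1).

Notation "[ a , b ]_ k" := (commutator (x k a) (x k b))
  (at level 0, a at level 99, b at level 99, k at level 0).

(* The seven defining relations r_1, ..., r_7 of A_k (r j = r_{j+1}). *)
Definition rel (k : fieldType) (j : 'I_7) : FreeAlg k 7 :=
  match val j with
  | 0 => [2,3]_k + [4,5]_k + [6,7]_k
  | 1 => [3,1]_k + [4,6]_k + [7,5]_k
  | 2 => [1,2]_k + [6,5]_k + [7,4]_k
  | 3 => [5,1]_k + [3,7]_k + [6,2]_k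
  | 4 => [1,4]_k + [2,7]_k + [3,6]_k
  | 5 => [7,1]_k + [5,3]_k + [2,4]_k
  | _ => [1,6]_k + [4,3]_k + [5,2]_k
  end.

(* A_k = k<x_1..x_7>/(r_1..r_7). By the universal property of this quotient,
   graded k-algebra homomorphisms A_k -> B are exactly graded k-algebra
   homomorphisms k<x_1..x_7> -> B vanishing on r_1,...,r_7.
   "F_k is a quotient of A_k by a graded ideal" means there is a surjective
   graded k-algebra homomorphism A_k -> F_k (its kernel is the graded ideal),
   where F_k = k<y_1,y_2> is the free algebra on two generators of degree 1. *)
Definition F_graded_quotient_of_A (k : fieldType) : Prop :=
  exists phi : {lrmorphism FreeAlg k 7 -> FreeAlg k 2},
    [/\ forall j : 'I_7, phi (rel k j) = 0,
        forall (d : nat) (p : FreeAlg k 7),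
          homogeneous d p -> homogeneous d (phi p)
      & forall q : FreeAlg k 2, exists p : FreeAlg k 7, phi p = q].

(* The coefficients of r_1, ..., r_7 are the structure constants of the
   seven-dimensional cross product.  A graded map k<x_1..x_7> -> k<y_1,y_2> is
   given by x_j |-> A_j y_1 + B_j y_2, and it sends r_j to (A x B)_j [y_1,y_2].
   As [y_1,y_2] <> 0, it kills the relations iff A x B = 0, and it is onto iff
   A and B are independent.  With i^2 = -1 the pair A = e_3 + i e_4,
   B = e_2 - i e_5 works.  Over a real field, Lagrange's identity
   sum_(p,q) (A_p B_q - B_p A_q)^2 = 2 |A x B|^2 makes A and B dependent, so a
   nonzero linear form in the y-coordinates vanishes on the images of the x_j,
   hence on the whole image, which therefore misses y_1 or y_2. *)

From Pilot Require Import Defs.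
From HB Require Import structures.
From mathcomp Require Import all_boot all_order all_algebra.
From mathcomp Require Import finmap monalg Rstruct ring.

Set Implicit Arguments.
Unset Strict Implicit.
Unset Printing Implicit Defensive.
Import GRing.Theory Num.Theory.
Local Open Scope ring_scope.

Section Bracket.
Variable R : ringType.
Implicit Types a b : R.

Definition bracket a b : R := a * b - b * a.

Lemma bracketC a b : bracket b a = - bracket a b.
Proof. by rewrite /bracket opprB. Qed.

Lemma bracketxx a : bracket a a = 0.
Proof. exact: subrr. Qed.

End Bracket.

Lemma rmorph_bracket (R S : ringType) (f : {rmorphism R -> S}) (a b : R) :
  f (bracket a b) = bracket (f a) (f b).
Proof. by rewrite /bracket rmorphB !rmorphM. Qed.

(* [Defs.rel k j] is [rel7 (x k) j] (lemma [rel_rel7]).  Computing with the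
   relations inside the concrete [FreeAlg k 7] is prohibitively slow, so it is
   done over an abstract ring. *)
Section SevenRelations.
Variable R : ringType.

Definition rel7 (g : nat -> R) (j : nat) : R :=
  match j with
  | 0 => bracket (g 2) (g 3) + bracket (g 4) (g 5) + bracket (g 6) (g 7)
  | 1 => bracket (g 3) (g 1) + bracket (g 4) (g 6) + bracket (g 7) (g 5)
  | 2 => bracket (g 1) (g 2) + bracket (g 6) (g 5) + bracket (g 7) (g 4)
  | 3 => bracket (g 5) (g 1) + bracket (g 3) (g 7) + bracket (g 6) (g 2)
  | 4 => bracket (g 1) (g 4) + bracket (g 2) (g 7) + bracket (g 3) (g 6)
  | 5 => bracket (g 7) (g 1) + bracket (g 5) (g 3) + bracket (g 2) (g 4)
  | _ => bracket (g 1) (g 6) + bracket (g 4) (g 3) + bracket (g 5) (g 2)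
  end.

End SevenRelations.

Lemma rel_rel7 (k : fieldType) (j : 'I_7) : Defs.rel k j = rel7 (x k) j.
Proof. by case: j => [[|[|[|[|[|[|[|//]]]]]]] ?]. Qed.

Section CrossProduct.
Variable K : comNzRingType.
Implicit Types A B : nat -> K.

Definition minor2 A B (p q : nat) : K := A p * B q - B p * A q.

(* Coordinate j collects the minors of the three Fano lines through j, with
   the index pattern and signs of r_(j+1). *)
Definition cross7 A B (j : nat) : K :=
  match j with
  | 0 => minor2 A B 1 2 + minor2 A B 3 4 + minor2 A B 5 6
  | 1 => minor2 A B 2 0 + minor2 A B 3 5 + minor2 A B 6 4
  | 2 => minor2 A B 0 1 + minor2 A B 5 4 + minor2 A B 6 3
  | 3 => minor2 A B 4 0 + minor2 A B 2 6 + minor2 A B 5 1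
  | 4 => minor2 A B 0 3 + minor2 A B 1 6 + minor2 A B 2 5
  | 5 => minor2 A B 6 0 + minor2 A B 4 2 + minor2 A B 1 3
  | _ => minor2 A B 0 5 + minor2 A B 3 2 + minor2 A B 4 1
  end.

Lemma sum_minor2_sqr A B :
  \sum_(p < 7) \sum_(q < 7) minor2 A B p q ^+ 2 =
  (\sum_(j < 7) cross7 A B j ^+ 2) *+ 2.
Proof. rewrite !big_ord_recr !big_ord0 /= /cross7 /minor2; ring. Qed.

End CrossProduct.

Section RealCrossProduct.
Variable R : realDomainType.
Implicit Types A B : nat -> R.

Lemma cross7_eq0_minor2 A B : (forall j, (j < 7)%N -> cross7 A B j = 0) ->
  forall p q, (p < 7)%N -> (q < 7)%N -> minor2 A B p q = 0.
Proof.
move=> hAB p q hp hq.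
have sum0 : \sum_(p < 7) \sum_(q < 7) minor2 A B p q ^+ 2 = 0.
  by rewrite sum_minor2_sqr big1 ?mul0rn // => j _; rewrite hAB // expr0n.
have row0 := psumr_eq0P (fun i _ => sumr_ge0 _ (fun j _ => sqr_ge0 _)) sum0.
have := @psumr_eq0P _ _ _ _ (fun j _ => sqr_ge0 _) (row0 (Ordinal hp) isT) (Ordinal hq) isT.
by move/eqP; rewrite sqrf_eq0 => /eqP.
Qed.

Lemma cross7_eq0_dependent A B : (forall j, (j < 7)%N -> cross7 A B j = 0) ->
  exists u v : R, (u != 0) || (v != 0) /\ forall j, (j < 7)%N -> u * A j + v * B j = 0.
Proof.
move=> /cross7_eq0_minor2 hM.
have [[j0 /= hj0 Aj0] | A0] := pickP (fun j : 'I_7 => A j != 0).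
  exists (B j0), (- A j0); split; first by rewrite oppr_eq0 Aj0 orbT.
  move=> j hj; have /eqP := hM j0 j hj0 hj.
  by rewrite /minor2 subr_eq0 mulNr mulrC => /eqP ->; rewrite subrr.
exists 1, 0; split; first by rewrite oner_eq0.
by move=> j hj; have /negbFE/eqP := A0 (Ordinal hj); rewrite mul1r mul0r addr0.
Qed.

End RealCrossProduct.

Section CentralScalars.
Variables (K : comNzRingType) (S : lalgType K).
(* The algType axiom, which monalg does not provide for {malg R[M]}. *)
Hypothesis scalerAr_S : forall (c : K) (u v : S), c *: (u * v) = u * (c *: v).
Implicit Types U V W : S.

Lemma bracketZDl (a b : K) U V W :
  bracket (a *: U + b *: V) W = a *: bracket U W + b *: bracket V W.
Proof.
rewrite /bracket mulrDl mulrDr -!scalerAl -!scalerAr_S !scalerBr.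
by rewrite opprD addrACA.
Qed.

Lemma bracketZDr (a b : K) U V W :
  bracket W (a *: U + b *: V) = a *: bracket W U + b *: bracket W V.
Proof.
rewrite /bracket mulrDl mulrDr -!scalerAl -!scalerAr_S !scalerBr.
by rewrite opprD addrACA.
Qed.

Lemma bracket_lincomb (a b c d : K) U V :
  bracket (a *: U + b *: V) (c *: U + d *: V) = (a * d - b * c) *: bracket U V.
Proof.
rewrite bracketZDl !bracketZDr !bracketxx (bracketC U V).
by rewrite !scaler0 add0r addr0 !scalerN !scalerA scalerBl.
Qed.

Lemma rel7_lincomb (R : ringType) (phi : {rmorphism R -> S})
    (g : nat -> R) (A B : nat -> K) U V :
  (forall a, (0 < a <= 7)%N -> phi (g a) = A a.-1 *: U + B a.-1 *: V) ->
  forall j, phi (rel7 g j) = cross7 A B j *: bracket U V.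
Proof.
move=> hAB [|[|[|[|[|[|j]]]]]];
by rewrite /rel7 2!rmorphD !rmorph_bracket !hAB // !bracket_lincomb -!scalerDl.
Qed.

End CentralScalars.

Section MonoidAlgebraOverComRing.
Variables (R : comNzRingType) (M : monomType).
Implicit Types (p q : {malg R[M]}).

Lemma mulr_malgC (c : R) p : p * c%:MP = c *: p.
Proof.
rewrite malgZ_def malgM_def fgmulgU /fgscale.
by apply: eq_bigr => m _; rewrite mulm1 mulrC.
Qed.

Lemma malg_scalerAr (c : R) p q : c *: (p * q) = p * (c *: q).
Proof. by rewrite scalerAl -[c *: p]mulr_malgC -mulrA mul_malgC. Qed.

End MonoidAlgebraOverComRing.

Section FreeAlgebra.
Variables (k : fieldType) (n : nat).
Implicit Types (p q : FreeAlg k n) (m : {fmonom 'I_n}).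

Lemma malgUZ (c : k) m : << c *g m >> = c *: (<< m >> : FreeAlg k n).
Proof. by apply/malgP => m'; rewrite mcoeffZ !mcoeffU mulr_natr. Qed.

Lemma fmu_eq (i j : 'I_n) : (fmu i == fmu j) = (i == j).
Proof. by rewrite fmP !fmU; apply/eqP/eqP => [[]|->]. Qed.

Lemma mcoeff_gen (i j : 'I_n) : (gen k i)@_(fmu j) = (i == j)%:R.
Proof. by rewrite mcoeffU fmu_eq. Qed.

Lemma malgU_prod_gen m : << m >> = \prod_(i <- m) gen k i.
Proof.
case: m => s; elim: s => [|a s IH] /=.
  by rewrite big_nil; congr (<< _ >>); apply: val_inj; rewrite /= fm1.
rewrite big_cons -IH /gen malgM_def fgmulUU mulr1; congr (<< _ >>).
by apply: val_inj; rewrite /= fmM fmU.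
Qed.

Lemma homogeneous0 d : homogeneous d (0 : FreeAlg k n).
Proof. by move=> m; rewrite mcoeff0 eqxx. Qed.

Lemma homogeneousD d p q :
  homogeneous d p -> homogeneous d q -> homogeneous d (p + q).
Proof.
move=> hp hq m; rewrite mcoeffD.
by have [->|/hp //] := eqVneq p@_m 0; rewrite add0r => /hq.
Qed.

Lemma homogeneousZ d (c : k) p : homogeneous d p -> homogeneous d (c *: p).
Proof. by move=> hp m; rewrite mcoeffZ mulf_eq0 negb_or => /andP[_ /hp]. Qed.

Lemma homogeneousM d1 d2 p q :
  homogeneous d1 p -> homogeneous d2 q -> homogeneous (d1 + d2) (p * q).
Proof.
move=> hp hq m; rewrite mcoeff_neq0 => /msuppM_le [m1 [m2 [h1 h2 ->]]].
by rewrite fmM size_cat hp ?hq // mcoeff_neq0.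
Qed.

Lemma homogeneousU m : homogeneous (size m) (<< m >> : FreeAlg k n).
Proof. by move=> m'; rewrite mcoeffU; have [->|] := eqVneq m m'; rewrite ?eqxx. Qed.

Lemma homogeneous_gen (i : 'I_n) : homogeneous 1 (gen k i).
Proof. by have := homogeneousU (m := fmu i); rewrite fmU. Qed.

Lemma homogeneous_prod (I : Type) (s : seq I) (F : I -> FreeAlg k n) :
  (forall i, homogeneous 1 (F i)) -> homogeneous (size s) (\prod_(i <- s) F i).
Proof.
move=> hF; elim: s => [|a s IH]; last by rewrite big_cons; exact: homogeneousM (hF a) IH.
by have := homogeneousU (m := mone); rewrite big_nil fm1.
Qed.

Lemma homogeneous_sum (I : Type) (s : seq I) (P : pred I) (F : I -> FreeAlg k n) d :
  (forall i, P i -> homogeneous d (F i)) ->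
  homogeneous d (\sum_(i <- s | P i) F i).
Proof.
move=> hF; elim/big_rec: _ => [|i p Pi hp]; first exact: homogeneous0.
exact: homogeneousD (hF i Pi) hp.
Qed.

Lemma homogeneous1_sum_gen q : homogeneous 1 q -> q = \sum_i q@_(fmu i) *: gen k i.
Proof.
move=> hq; apply/malgP => m; rewrite raddf_sum /=.
have [/eqP|m1] := eqVneq (size m) 1%N.
  case: m => [[|j [|]]] // _; rewrite -fmuE.
  under eq_bigr => i _ do rewrite mcoeffZ mcoeff_gen.
  by rewrite (bigD1 j) //= eqxx mulr1 big1 ?addr0 // => i /negbTE ->; rewrite mulr0.
have -> : q@_m = 0 by apply/eqP; apply: contraNT m1 => /hq ->.
apply/esym/big1 => i _; rewrite mcoeffZ /gen mcoeffU.
have -> : (fmu i == m) = false by apply: contraNF m1 => /eqP <-; rewrite fmU.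
by rewrite mulr0.
Qed.

Lemma bracket_gen_neq0 (i j : 'I_n) : i != j -> bracket (gen k i) (gen k j) != 0.
Proof.
have gen_mul a b : gen k a * gen k b = << mmul (fmu a) (fmu b) >>.
  by rewrite /gen malgM_def fgmulUU mulr1.
move=> ij; apply/eqP => /malgP /(_ (mmul (fmu i) (fmu j))).
rewrite mcoeff0 /bracket mcoeffB !gen_mul !mcoeffU eqxx.
have -> : (mmul (fmu j) (fmu i) == mmul (fmu i) (fmu j)) = false.
  by rewrite fmP !fmM !fmU; apply: contraNF ij => /eqP [->].
by rewrite subr0 => /eqP; rewrite oner_eq0.
Qed.

End FreeAlgebra.

Section Substitution.
Variables (k : fieldType) (m n : nat) (L : 'I_m -> FreeAlg k n).

Definition subst_word (w : {fmonom 'I_m}) : FreeAlg k n := \prod_(i <- w) L i.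

Lemma subst_word_is_mmorphism : mmorphism subst_word.
Proof. by split=> [w w'|]; rewrite /subst_word ?fmM ?big_cat // fm1 big_nil. Qed.

HB.instance Definition _ :=
  monalg.isMultiplicative.Build _ _ subst_word subst_word_is_mmorphism.

Definition subst_alg (p : FreeAlg k m) : FreeAlg k n :=
  mmap (@malgC {fmonom 'I_n} k) subst_word p.

Lemma subst_alg_is_additive : additive subst_alg.
Proof. exact: mmap_is_additive. Qed.

Lemma subst_alg_is_multiplicative : multiplicative subst_alg.
Proof.
by apply: commr_mmap_is_multiplicative => c w w'; rewrite /GRing.comm mulr_malgC mul_malgC.
Qed.

Lemma subst_alg_is_scalable : scalable subst_alg.
Proof. by move=> c p; rewrite /subst_alg mmapZ mul_malgC. Qed.

HB.instance Definition _ := GRing.isAdditive.Build (FreeAlg k m) (FreeAlg k n)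
  subst_alg subst_alg_is_additive.
HB.instance Definition _ := GRing.isMultiplicative.Build (FreeAlg k m) (FreeAlg k n)
  subst_alg subst_alg_is_multiplicative.
HB.instance Definition _ := GRing.isScalable.Build k (FreeAlg k m) (FreeAlg k n)
  *:%R subst_alg subst_alg_is_scalable.

Lemma subst_alg_gen (i : 'I_m) : subst_alg (gen k i) = L i.
Proof.
rewrite /subst_alg /gen mmapU.
change ((1 : k)%:MP * subst_word (fmu i) = L i).
by rewrite mpolyC1E mul1r /subst_word fmU big_seq1.
Qed.

Lemma homogeneous_subst_alg d p :
  (forall i, homogeneous 1 (L i)) -> homogeneous d p -> homogeneous d (subst_alg p).
Proof.
move=> hL hp; rewrite /subst_alg mmapE big_seq; apply: homogeneous_sum => w hw.
rewrite mul_malgC; apply: homogeneousZ.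
by rewrite -(hp w) ?mcoeff_neq0 //; apply: homogeneous_prod.
Qed.

End Substitution.

Lemma lrmorph_surj_gen (k : fieldType) (m n : nat)
    (phi : {lrmorphism FreeAlg k m -> FreeAlg k n}) (s : 'I_n -> FreeAlg k m) :
  (forall i, phi (s i) = gen k i) -> forall q, exists p, phi p = q.
Proof.
move=> hs q; exists (\sum_(w <- msupp q) q@_w *: \prod_(i <- w) s i).
rewrite [RHS]monalgE raddf_sum; apply: eq_bigr => w _.
transitivity (q@_w *: phi (\prod_(i <- w) s i)); first exact: linearZZ.
rewrite rmorph_prod malgUZ malgU_prod_gen.
by congr (_ *: _); apply: eq_bigr => i _; apply: hs.
Qed.

Section DegreeOneForm.
Variables (k : fieldType) (n : nat) (w : 'I_n -> k).
Implicit Types p q : FreeAlg k n.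

Definition deg1_form q : k := \sum_i w i * q@_(fmu i).

Lemma deg1_form0 : deg1_form 0 = 0.
Proof. by apply: big1 => i _; rewrite mcoeff0 mulr0. Qed.

Lemma deg1_formD p q : deg1_form (p + q) = deg1_form p + deg1_form q.
Proof. by rewrite -big_split; apply: eq_bigr => i _; rewrite mcoeffD mulrDr. Qed.

Lemma deg1_formZ (c : k) q : deg1_form (c *: q) = c * deg1_form q.
Proof. by rewrite mulr_sumr; apply: eq_bigr => i _; rewrite mcoeffZ mulrCA. Qed.

Lemma deg1_form_gen i : deg1_form (gen k i) = w i.
Proof.
rewrite /deg1_form (bigD1 i) //= mcoeff_gen eqxx mulr1 big1 ?addr0 // => j ji.
by rewrite mcoeff_gen eq_sym (negbTE ji) mulr0.
Qed.

Lemma deg1_form_homogeneous d q : d != 1%N -> homogeneous d q -> deg1_form q = 0.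
Proof.
move=> d1 hq; apply: big1 => i _; apply/eqP; rewrite mulf_eq0; apply/orP; right.
by apply: contraNT d1 => /hq; rewrite fmU => <-.
Qed.

End DegreeOneForm.

Lemma graded_image_deg1_form (k : fieldType) (m n : nat)
    (phi : {lrmorphism FreeAlg k m -> FreeAlg k n}) (w : 'I_n -> k) :
  (forall d p, homogeneous d p -> homogeneous d (phi p)) ->
  (forall a, deg1_form w (phi (gen k a)) = 0) ->
  forall p, deg1_form w (phi p) = 0.
Proof.
move=> hhom hgen p; rewrite (monalgE p) raddf_sum.
elim/big_rec: _ => [|mo q _ IH]; first exact: deg1_form0.
rewrite deg1_formD IH addr0 malgUZ.
transitivity (deg1_form w (p@_mo *: phi << mo >>)); first by congr deg1_form; exact: linearZZ.
rewrite deg1_formZ; apply/eqP; rewrite mulf_eq0; apply/orP; right; apply/eqP.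
have [/eqP|d1] := eqVneq (size mo) 1%N.
  by case: mo => [[|a [|]]] //= _; rewrite -fmuE; exact: hgen.
exact: deg1_form_homogeneous d1 (hhom _ _ (homogeneousU (m := mo))).
Qed.

Section TwoGenerators.
Variable k : fieldType.

Definition y0 : FreeAlg k 2 := gen k ord0.
Definition y1 : FreeAlg k 2 := gen k ord_max.

Lemma sum_ord2 (V : nmodType) (F : 'I_2 -> V) : \sum_i F i = F ord0 + F ord_max.
Proof. by rewrite big_ord_recl big_ord1; congr (_ + F _); apply: val_inj. Qed.

Lemma homogeneous1_lincomb (q : FreeAlg k 2) :
  homogeneous 1 q -> q = q@_(fmu ord0) *: y0 + q@_(fmu ord_max) *: y1.
Proof.
move=> hq; transitivity (\sum_(i < 2) q@_(fmu i) *: gen k i).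
  exact: homogeneous1_sum_gen.
exact: sum_ord2.
Qed.

Lemma bracket_y_neq0 : bracket y0 y1 != 0.
Proof. exact: bracket_gen_neq0. Qed.

End TwoGenerators.

Section SquareRootOfMinusOne.
Variables (k : fieldType) (i : k).
Hypothesis sqr_i : i ^+ 2 = -1.

(* e_3 + i e_4 and e_2 - i e_5 in the paper's numbering of x_1, ..., x_7. *)
Definition nullA (j : nat) : k := match j with 2 => 1 | 3 => i | _ => 0 end.
Definition nullB (j : nat) : k := match j with 1 => 1 | 4 => - i | _ => 0 end.

Lemma cross7_null j : cross7 nullA nullB j = 0.
Proof.
case: j => [|[|[|[|[|[|j]]]]]]; rewrite /cross7 /minor2 /nullA /nullB; try ring.
by rewrite mulrN -[i * i]expr2 sqr_i; ring.
Qed.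

Definition null_image (a : 'I_7) : FreeAlg k 2 := nullA a *: y0 k + nullB a *: y1 k.

Lemma null_image_x a : (0 < a <= 7)%N ->
  subst_alg null_image (x k a) = nullA a.-1 *: y0 k + nullB a.-1 *: y1 k.
Proof. by case/andP=> a0 a7; rewrite subst_alg_gen /null_image inordK // prednK. Qed.

Lemma F_graded_quotient_of_A_sqrtN1 : F_graded_quotient_of_A k.
Proof.
have y0_image : subst_alg null_image (x k 3) = y0 k.
  by rewrite null_image_x //= scale1r scale0r addr0.
have y1_image : subst_alg null_image (x k 2) = y1 k.
  by rewrite null_image_x //= scale1r scale0r add0r.
exists (subst_alg null_image); split.
- move=> j; rewrite rel_rel7 (rel7_lincomb (@malg_scalerAr _ _) null_image_x).
  by rewrite cross7_null scale0r.
- move=> d p; apply: homogeneous_subst_alg => a.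
  by apply: homogeneousD; apply: homogeneousZ; apply: homogeneous_gen.
apply: (lrmorph_surj_gen (s := fun j => if j == ord0 then x k 3 else x k 2)).
case=> [[|[|//]] hj] /=.
  by rewrite (_ : Ordinal hj = ord0) //; apply: val_inj.
by rewrite (_ : Ordinal hj = ord_max) //; apply: val_inj.
Qed.

End SquareRootOfMinusOne.

Definition gen_coord (k : fieldType) (phi : FreeAlg k 7 -> FreeAlg k 2)
    (l : 'I_2) (j : nat) : k :=
  (phi (gen k (inord j)))@_(fmu l).

Lemma graded_quotient_cross7_eq0 (k : fieldType)
    (phi : {lrmorphism FreeAlg k 7 -> FreeAlg k 2}) :
  (forall j, phi (Defs.rel k j) = 0) ->
  (forall d p, homogeneous d p -> homogeneous d (phi p)) ->
  forall j, (j < 7)%N -> cross7 (gen_coord phi ord0) (gen_coord phi ord_max) j = 0.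
Proof.
move=> hrel hhom j hj.
have hAB a : (0 < a <= 7)%N ->
    phi (x k a) = gen_coord phi ord0 a.-1 *: y0 k + gen_coord phi ord_max a.-1 *: y1 k.
  by move=> _; apply: homogeneous1_lincomb; apply: hhom; apply: homogeneous_gen.
have := hrel (inord j); rewrite rel_rel7 (rel7_lincomb (@malg_scalerAr _ _) hAB) inordK //.
by move/eqP; rewrite scaler_eq0 (negbTE (bracket_y_neq0 k)) orbF => /eqP.
Qed.

Lemma not_F_graded_quotient_of_A_real (R : realFieldType) : ~ F_graded_quotient_of_A R.
Proof.
case=> phi [hrel hhom hsurj].
have [u [v [uv0 huv]]] := cross7_eq0_dependent (graded_quotient_cross7_eq0 hrel hhom).
pose w (l : 'I_2) := if l == ord0 then u else v.
have w_image p : deg1_form w (phi p) = 0.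
  apply: graded_image_deg1_form hhom _ p => a.
  rewrite /deg1_form sum_ord2 /w eqxx /= -[a]inord_val; exact: huv.
have w0 l : w l = 0.
  by have [p hp] := hsurj (gen R l); rewrite -(deg1_form_gen w) -hp w_image.
have u0 : u = 0 by exact: w0 ord0.
have v0 : v = 0 by exact: w0 ord_max.
by move: uv0; rewrite u0 v0 eqxx.
Qed.

Theorem proposition6p2 :
  (forall k : fieldType,
      (2%:R : k) != 0 ->
      (exists i : k, i ^+ 2 = -1) ->
      F_graded_quotient_of_A k)
  /\ ~ F_graded_quotient_of_A Rdefinitions.R.
Proof.
split; last exact: not_F_graded_quotient_of_A_real.
by move=> k _ [i sqr_i]; apply: F_graded_quotient_of_A_sqrtN1 sqr_i.
Qed.
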